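(* Let $\mathcal{X}$ be a finite nonempty set of types, $n=(n_x)_{x\in\mathcal{X}}$ nonnegative integers with $n_x$ even for every $x$, and $\Phi=(\Phi_{xy})_{x,y\in\mathcal{X}}$ a real matrix with $\Phi_{xy}=\Phi_{yx}$ for all $x,y$. Then a stable roommate matching exists.
   Context: Roommate matching with transferable utility: $n_x$ is the number of individuals of type $x$; a pair of types $\{x,y\}$ (possibly $x=y$) generates joint surplus $\Phi_{xy}$; singles get utility $0$. Feasible roommate matchings: $\mathcal{P}(n)=\{\mu=(\mu_{xy})_{x,y\in\mathcal{X}}:\ \mu_{xy}\in\mathbb{N},\ \mu_{xy}=\mu_{yx},\ 2\mu_{xx}+\sum_{y\neq x}\mu_{xy}\le n_x\ \forall x\}$. Total surplus $S_R(\mu;\Phi)=\sum_x\mu_{xx}\Phi_{xx}+\sum_{x\neq y}\mu_{xy}\Phi_{xy}/2$. An outcome is a pair $(\mu,u)$ with $\mu\in\mathcal{P}(n)$, $u\in\mathbb{R}^{\mathcal{X}}$ and $\sum_x n_xu_x=S_R(\mu;\Phi)$; it is stable if $u_x\ge0$ and $u_x+u_y\ge\Phi_{xy}$ for all $x,y\in\mathcal{X}$. A matching $\mu$ is a stable roommate matching if some $u$ makes $(\mu,u)$ a stable outcome. *)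

From mathcomp Require Import all_boot all_order all_algebra.
Set Implicit Arguments. Unset Strict Implicit. Unset Printing Implicit Defensive.
Import Order.TTheory GRing.Theory Num.Theory.
Local Open Scope ring_scope.

Section Roommate.
Variables (R : realFieldType) (X : finType).

Definition feasible_matching (n : X -> nat) (mu : X -> X -> nat) : Prop :=
  (forall x y, mu x y = mu y x) /\
  (forall x, (2 * mu x x + \sum_(y | y != x) mu x y <= n x)%N).

Definition total_surplus (Phi : X -> X -> R) (mu : X -> X -> nat) : R :=
  \sum_x (mu x x)%:R * Phi x x
  + \sum_x \sum_(y | y != x) (mu x y)%:R * Phi x y / 2.

Definition is_outcome (n : X -> nat) (Phi : X -> X -> R)
  (mu : X -> X -> nat) (u : X -> R) : Prop :=
  feasible_matching n mu /\ \sum_x (n x)%:R * u x = total_surplus Phi mu.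

Definition stable_outcome (n : X -> nat) (Phi : X -> X -> R)
  (mu : X -> X -> nat) (u : X -> R) : Prop :=
  is_outcome n Phi mu u /\
  (forall x, 0 <= u x) /\ (forall x y, Phi x y <= u x + u y).

Definition stable_roommate_matching (n : X -> nat) (Phi : X -> X -> R)
  (mu : X -> X -> nat) : Prop :=
  feasible_matching n mu /\ exists u : X -> R, stable_outcome n Phi mu u.

End Roommate.

From mathcomp Require Import all_boot all_order all_algebra all_fingroup.
From mathcomp Require Import zify ring lra.
Set Implicit Arguments. Unset Strict Implicit. Unset Printing Implicit Defensive.
Import Order.TTheory GRing.Theory Num.Theory.
Local Open Scope ring_scope.

(* Split each type [x] into [n x / 2] copies and solve the bipartite assignment
   problem between two copies of this population, with surplus [max(Phi, 0)].
   Its LP duality is proved combinatorially: an optimal permutation admits no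
   positive closed walk of gains, so the gain graph carries a potential, built
   by eliminating one vertex at a time.  Averaging the dual prices over the
   copies of each type gives type prices [alpha], [beta], and since [Phi] is
   symmetric, [u = (alpha + beta) / 2] is stable.  Counting assigned pairs of
   types gives a bipartite matching [nu] whose symmetrization [nu + nu^T] uses
   type [x] at most [2 (n x / 2) = n x] times and has the same surplus. *)

Lemma not_uniq_split (T : eqType) (s : seq T) : ~~ uniq s ->
  exists a y b c, s = a ++ y :: b ++ y :: c.
Proof.
elim: s => [|z r IH] //=; rewrite negb_and negbK.
case: (boolP (z \in r)) => [/splitPr [p1 p2] _|_ /= /IH [a [y [b [c ->]]]]].
  by exists [::], z, p1, p2.
by exists (z :: a), y, b, c.
Qed.

Section Walks.
Variables (R : realDomainType) (V : finType).
Implicit Types (w : V -> V -> R) (x y v : V) (s q : seq V) (S : {set V}).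

Fixpoint walk_weight w x s : R :=
  if s is y :: s' then w x y + walk_weight w y s' else 0.

Lemma walk_weight_cat w x s1 s2 :
  walk_weight w x (s1 ++ s2) = walk_weight w x s1 + walk_weight w (last x s1) s2.
Proof.
elim: s1 x => [|y s1 IH] x /=; first by rewrite add0r.
by rewrite IH addrA.
Qed.

Lemma walk_weight_rcons w x s y :
  walk_weight w x (rcons s y) = walk_weight w x s + w (last x s) y.
Proof. by rewrite -cats1 walk_weight_cat /= addr0. Qed.

Lemma positive_closed_walk_cycle w x s : last x s = x -> 0 < walk_weight w x s ->
  exists y q, uniq (y :: q) /\ 0 < walk_weight w y (rcons q y).
Proof.
have [N] := ubnP (size s); elim: N x s => // N IH x s sizeN closed pos.
have [|/not_uniq_split [a [y [b [c def_s]]]]] := boolP (uniq s).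
  case/lastP: s closed pos {sizeN} => [|q z] /=; first by rewrite ltxx.
  rewrite last_rcons => -> uniq_s pos; exists x, q.
  by rewrite -rcons_uniq.
have loop_closed : last y (rcons b y) = y by rewrite last_rcons.
have rest_closed : last x (a ++ y :: c) = x.
  by rewrite -[RHS]closed def_s !last_cat /= last_cat.
have split_weight : walk_weight w x s =
    walk_weight w x (a ++ y :: c) + walk_weight w y (rcons b y).
  rewrite def_s -cat_rcons -cat_rcons !walk_weight_cat !last_rcons /=.
  by rewrite [walk_weight w x (rcons a y)]walk_weight_rcons; ring.
have [loop_pos|loop_nonpos] := ltrP 0 (walk_weight w y (rcons b y)).
  apply: (IH y (rcons b y)) => //.
  by move: sizeN; rewrite def_s size_cat /= size_cat size_rcons /=; lia.
apply: (IH x (a ++ y :: c)) => //; last by rewrite split_weight in pos; lra.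
by move: sizeN; rewrite def_s !size_cat /= size_cat /=; lia.
Qed.

Lemma walk_weight_fpath w (f : V -> V) x s : fpath f x s ->
  walk_weight w x s = \sum_(i <- belast x s) w i (f i).
Proof.
elim: s x => [|y s IH] x /=; first by rewrite big_nil.
by case/andP=> /eqP <- /IH ->; rewrite big_cons.
Qed.

Lemma walk_weight_cycle w x q : uniq (x :: q) -> (forall i, w i i = 0) ->
  \sum_i w i (next (x :: q) i) = walk_weight w x (rcons q x).
Proof.
move=> uniq_xq w_diag0.
rewrite (walk_weight_fpath w (cycle_next uniq_xq)) belast_rcons.
rewrite (big_uniq _ uniq_xq) [RHS]big_mkcond; apply: eq_bigr => i _.
by case: ifPn => // i_notin; rewrite next_nth (negbTE i_notin) w_diag0.
Qed.

Definition nonpositive_closed_walks S w := forall x s,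
  x \in S -> {subset s <= S} -> last x s = x -> walk_weight w x s <= 0.

Section Shortcut.
Variables (w : V -> V -> R) (v : V).

Definition shortcut i k := Num.max (w i k) (w i v + w v k).

Fixpoint detour x s : seq V :=
  if s is y :: s' then
    (if w x y < w x v + w v y then [:: v; y] else [:: y]) ++ detour y s'
  else [::].

Lemma last_detour x s : last x (detour x s) = last x s.
Proof.
elim: s x => [|y s IH] x //=.
by rewrite last_cat; case: ifP => _ /=; rewrite IH.
Qed.

Lemma walk_weight_detour x s :
  walk_weight shortcut x s = walk_weight w x (detour x s).
Proof.
elim: s x => [|y s IH] x //=.
rewrite walk_weight_cat IH /shortcut.
by case: ltrP => _ /=; rewrite ?addr0 ?addrA.
Qed.

Lemma detour_subset S x s :
  v \in S -> {subset s <= S} -> {subset detour x s <= S}.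
Proof.
move=> vS; elim: s x => [|y s IH] x //= sS z.
have yS : y \in S by apply: sS; rewrite inE eqxx.
have {}IH : {subset detour y s <= S}.
  by apply: IH => t ts; apply: sS; rewrite inE ts orbT.
rewrite mem_cat => /orP [|/IH //].
by case: ifP => _; rewrite !inE ?orbF; [case/orP|]; move/eqP->.
Qed.

Lemma shortcut_closed_walks S : v \in S ->
  nonpositive_closed_walks S w -> nonpositive_closed_walks (S :\ v) shortcut.
Proof.
move=> vS w_nonpos x s /setD1P [_ xS] sS closed.
rewrite walk_weight_detour; apply: w_nonpos => //; last by rewrite last_detour.
by apply: detour_subset => // t /sS /setD1P [].
Qed.

Lemma shortcut_ge i k : w i k <= shortcut i k.
Proof. by rewrite le_max lexx. Qed.

Lemma shortcut_ge_via i k : w i v + w v k <= shortcut i k.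
Proof. by rewrite le_max lexx orbT. Qed.

Lemma potential_extend S (pi : V -> R) : v \in S -> w v v <= 0 ->
    {in S :\ v &, forall i k, pi i + shortcut i k <= pi k} ->
  exists pi' : V -> R, {in S &, forall i k, pi' i + w i k <= pi' k}.
Proof.
move=> vS wvv pi_shortcut.
have [S'0|[k0 k0S']] := set_0Vmem (S :\ v).
  have only_v j : j \in S -> j = v.
    move=> jS; apply/eqP; apply: (contraFT _ (in_set0 j)) => jv.
    by rewrite -S'0 !inE jv.
  by exists (fun=> 0) => i k /only_v -> /only_v ->; rewrite add0r.
case: (arg_minP (fun k => pi k - w v k) k0S') => k1 k1S' k1_min.
exists (fun x => if x == v then pi k1 - w v k1 else pi x) => i k iS kS.
have in_S' j : j != v -> j \in S -> j \in S :\ v by move=> jv jS; apply/setD1P.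
case: (eqVneq i v) => [->|iv]; case: (eqVneq k v) => [->|kv].
- by rewrite gerDl.
- by have := k1_min k (in_S' k kv kS); lra.
- have := pi_shortcut i k1 (in_S' i iv iS) k1S'.
  by have := shortcut_ge_via i k1; lra.
- have := pi_shortcut i k (in_S' i iv iS) (in_S' k kv kS).
  by have := shortcut_ge i k; lra.
Qed.

End Shortcut.

Lemma exists_potential S w : nonpositive_closed_walks S w ->
  exists pi : V -> R, {in S &, forall i k, pi i + w i k <= pi k}.
Proof.
have [N] := ubnP #|S|; elim: N S w => // N IH S w cardS w_nonpos.
have [->|[v vS]] := set_0Vmem S; first by exists (fun=> 0) => i; rewrite inE.
have wvv : w v v <= 0.
  by have := w_nonpos v [:: v] vS; rewrite /= addr0; apply=> // t /[!inE] /eqP ->.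
have cardS' : (#|S :\ v| < N)%N by move: cardS; rewrite (cardsD1 v S) vS.
have [pi pi_shortcut] := IH _ _ cardS' (shortcut_closed_walks vS w_nonpos).
exact: potential_extend vS wvv pi_shortcut.
Qed.
End Walks.

Section Assignment.
Variables (R : realDomainType) (U : finType) (B : U -> U -> R).

Definition assignment_value (s : {perm U}) := \sum_i B i (s i).

Lemma optimal_assignment_closed_walks (s : {perm U}) :
    (forall t, assignment_value t <= assignment_value s) ->
  nonpositive_closed_walks setT (fun i k => B k (s i) - B i (s i)).
Proof.
(* [w i k] is the gain of handing the partner of [i] over to [k]; rotating
   partners along a positive cycle of gains would improve on [s]. *)
move=> s_opt x l _ _ closed; rewrite leNgt; apply/negP => pos.
have [y [q [uniq_yq]]] := positive_closed_walk_cycle closed pos.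
rewrite -walk_weight_cycle // => [gain|i]; last by rewrite subrr.
pose t := perm (can_inj (prev_next uniq_yq)).
have := s_opt (t^-1 * s)%g; rewrite leNgt => /negP; apply.
rewrite /assignment_value -subr_gt0 [X in _ < X - _](reindex_inj (@perm_inj _ t)).
by rewrite -sumrB; under eq_bigr do rewrite permM permK permE.
Qed.

Lemma assignment_duality : exists (s : {perm U}) (a b : U -> R),
  (forall i j, B i j <= a i + b j) /\
  \sum_i a i + \sum_j b j = \sum_i B i (s i).
Proof.
have [s _ s_opt] := @arg_maxP _ _ _ 1%g xpredT assignment_value erefl.
have [pi pi_le] :=
  exists_potential (optimal_assignment_closed_walks (fun t => s_opt t erefl)).
exists s, pi, (fun j => B (s^-1 j) j - pi (s^-1 j))%g; split.
  move=> i j; have := pi_le (s^-1 j)%g i (in_setT _) (in_setT _).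
  by rewrite permKV; lra.
rewrite [X in _ + X](reindex_inj (@perm_inj _ s)) /=.
under [X in _ + X]eq_bigr do rewrite permK.
by rewrite sumrB addrC subrK.
Qed.

End Assignment.

Section Copies.
Variables (X : finType) (m : X -> nat).

Definition copies := {x : X & 'I_(m x)}.
Definition copy x (k : 'I_(m x)) : copies := Tagged (fun z => 'I_(m z)) k.

Lemma big_copies (T : Type) (idx : T) (op : Monoid.com_law idx)
    (P : pred X) (F : copies -> T) :
  \big[op/idx]_(p : copies | P (tag p)) F p =
  \big[op/idx]_(x | P x) \big[op/idx]_(k < m x) F (copy k).
Proof.
rewrite (@sig_big_dep _ _ op X (fun x => 'I_(m x)) P (fun _ => xpredT)
  (fun x k => F (copy k))).
by apply: eq_big => -[x k] //=; rewrite andbT.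
Qed.

Lemma card_copies_of x : #|[pred p : copies | tag p == x]| = m x.
Proof.
rewrite -sum1_card (big_copies _ (pred1 x)) big_pred1_eq.
by rewrite sum1_card card_ord.
Qed.

Variable s : {perm copies}.

Definition pair_count x y :=
  #|[pred p : copies | (tag p == x) && (tag (s p) == y)]|.

Lemma sum_pair_count_row x : (\sum_y pair_count x y)%N = m x.
Proof.
rewrite -card_copies_of -sum1_card (partition_big (fun p => tag (s p)) xpredT) //=.
by apply: eq_bigr => y _; rewrite sum1_card.
Qed.

Lemma sum_pair_count_col y : (\sum_x pair_count x y)%N = m y.
Proof.
rewrite -card_copies_of -sum1_card (reindex_inj (@perm_inj _ s)).
rewrite (partition_big (fun p => tag p) xpredT) //=.
by apply: eq_bigr => x _; rewrite sum1_card; apply: eq_card => p; rewrite !inE andbC.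
Qed.

Lemma sum_copies_pair_count (R : pzSemiRingType) (F : X -> X -> R) :
  \sum_(p : copies) F (tag p) (tag (s p)) =
  \sum_x \sum_y (pair_count x y)%:R * F x y.
Proof.
rewrite (partition_big (fun p => tag p) xpredT) //=; apply: eq_bigr => x _.
rewrite (partition_big (fun p => tag (s p)) xpredT) //=; apply: eq_bigr => y _.
rewrite (eq_bigr (fun=> F x y)) => [|p /andP [/eqP -> /eqP ->] //].
by rewrite sumr_const mulr_natl.
Qed.

End Copies.

Section Transport.
Variables (R : realFieldType) (X : finType) (m : X -> nat).

Definition mean (I : finType) (f : I -> R) := (\sum_i f i) / #|I|%:R.

Lemma mean_ge (I : finType) (c : R) (f : I -> R) :
  (0 < #|I|)%N -> (forall i, c <= f i) -> c <= mean f.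
Proof.
move=> I_pos c_le; rewrite ler_pdivlMr ?ltr0n // mulr_natr -sumr_const.
exact: ler_sum.
Qed.

Lemma mulr_mean (I : finType) (f : I -> R) : #|I|%:R * mean f = \sum_i f i.
Proof.
have [I0|I_pos] := posnP #|I|; last by rewrite mulrC divfK // pnatr_eq0 -lt0n.
by rewrite I0 mul0r big1 // => i; have := card0_eq I0 i; rewrite inE.
Qed.

Definition type_mean (f : copies m -> R) x := mean (fun k : 'I_(m x) => f (copy k)).

Lemma type_mean_dual (P : X -> X -> R) (a b : copies m -> R) :
    (forall p q, P (tag p) (tag q) <= a p + b q) ->
  forall x y, (0 < m x)%N -> (0 < m y)%N -> P x y <= type_mean a x + type_mean b y.
Proof.
move=> dual x y mx_pos my_pos.
have le_mean_b (k : 'I_(m x)) : P x y - a (copy k) <= type_mean b y.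
  apply: mean_ge => [|l]; first by rewrite card_ord.
  by have /= := dual (copy k) (copy l); lra.
suff : P x y - type_mean b y <= type_mean a x by lra.
apply: mean_ge => [|k /=]; first by rewrite card_ord.
by have := le_mean_b k; lra.
Qed.

Lemma transport_duality (P : X -> X -> R) :
  exists (c : X -> X -> nat) (alpha beta : X -> R),
  [/\ forall x, (\sum_y c x y)%N = m x, forall y, (\sum_x c x y)%N = m y,
      forall x y, (0 < m x)%N -> (0 < m y)%N -> P x y <= alpha x + beta y
    & \sum_x (m x)%:R * (alpha x + beta x) = \sum_x \sum_y (c x y)%:R * P x y].
Proof.
have [s [a [b [dual value]]]] :=
  assignment_duality (fun p q : copies m => P (tag p) (tag q)).
exists (pair_count s), (type_mean a), (type_mean b); split.
- exact: sum_pair_count_row.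
- exact: sum_pair_count_col.
- exact: type_mean_dual.
rewrite -sum_copies_pair_count -value.
under eq_bigr do rewrite mulrDr -{1 2}(card_ord (m _)) !mulr_mean.
by rewrite big_split /= !(big_copies _ xpredT).
Qed.

End Transport.

Section Roommates.
Variables (R : realFieldType) (X : finType).

Definition symmetrize (nu : X -> X -> nat) x y :=
  if x == y then nu x x else (nu x y + nu y x)%N.

Lemma symmetrize_feasible (n : X -> nat) nu :
    (forall x, \sum_y nu x y + \sum_y nu y x <= n x)%N ->
  feasible_matching n (symmetrize nu).
Proof.
move=> capacity; split=> [x y|x].
  by rewrite /symmetrize eq_sym; case: eqVneq => [->|_] //; rewrite addnC.
rewrite /symmetrize eqxx (eq_bigr (fun y => nu x y + nu y x)%N); last first.
  by move=> y; rewrite eq_sym => /negbTE ->.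
rewrite big_split /=; have := capacity x.
by rewrite (bigD1 x) // [X in (_ + X <= _)%N](bigD1 x) //=; lia.
Qed.

Lemma total_surplus_symmetrize (Phi : X -> X -> R) nu :
    (forall x y, Phi x y = Phi y x) ->
  total_surplus Phi (symmetrize nu) = \sum_x \sum_y (nu x y)%:R * Phi x y.
Proof.
move=> Phi_sym; pose G x y := (nu x y)%:R * Phi x y.
have swap : \sum_x \sum_(y | y != x) G y x = \sum_x \sum_(y | y != x) G x y.
  rewrite (exchange_big_dep xpredT) //=; apply: eq_bigr => y _.
  by apply: eq_bigl => x; rewrite eq_sym.
have off_diag : \sum_x \sum_(y | y != x) (symmetrize nu x y)%:R * Phi x y / 2 =
    \sum_x \sum_(y | y != x) G x y.
  transitivity ((\sum_x \sum_(y | y != x) G x y +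
                 \sum_x \sum_(y | y != x) G y x) / 2); last by rewrite swap; lra.
  rewrite -big_split mulr_suml; apply: eq_bigr => x _.
  rewrite -big_split mulr_suml; apply: eq_bigr => y yx.
  by rewrite /symmetrize eq_sym (negbTE yx) natrD mulrDl /G (Phi_sym y x).
rewrite /total_surplus off_diag -big_split; apply: eq_bigr => x _.
by rewrite /symmetrize eqxx [RHS](bigD1 x).
Qed.

Lemma symmetrize_stable (n : X -> nat) (Phi : X -> X -> R) nu (u : X -> R) :
    (forall x y, Phi x y = Phi y x) ->
    (forall x, \sum_y nu x y + \sum_y nu y x <= n x)%N ->
    (forall x, 0 <= u x) -> (forall x y, Phi x y <= u x + u y) ->
    \sum_x (n x)%:R * u x = \sum_x \sum_y (nu x y)%:R * Phi x y ->
  stable_roommate_matching n Phi (symmetrize nu).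
Proof.
move=> Phi_sym capacity u_ge0 u_stable u_value.
have feasible := symmetrize_feasible capacity.
split=> //; exists u; split; last by [].
by split=> //; rewrite total_surplus_symmetrize.
Qed.

Lemma le_sum_norm (I : finType) (F : I -> R) i : F i <= \sum_j `|F j|.
Proof.
rewrite (bigD1 i) //= (le_trans (ler_norm _)) // lerDl.
by apply: sumr_ge0 => j _; exact: normr_ge0.
Qed.

Lemma symmetric_prices (m : X -> nat) (Phi : X -> X -> R) (alpha beta : X -> R) :
    (forall x y, Phi x y = Phi y x) ->
    (forall x y, (0 < m x)%N -> (0 < m y)%N ->
       Num.max (Phi x y) 0 <= alpha x + beta y) ->
  exists u : X -> R, [/\ forall x, 0 <= u x, forall x y, Phi x y <= u x + u y
    & forall x, (m x).*2%:R * u x = (m x)%:R * (alpha x + beta x)].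
Proof.
move=> Phi_sym dual.
(* Empty types weigh nothing in the total, so a large enough price does. *)
pose u x := if m x == 0%N then \sum_y `|Phi x y| else (alpha x + beta x) / 2.
have u_unmatched x : m x = 0%N -> u x = \sum_y `|Phi x y|.
  by rewrite /u => ->.
have u_matched x : (0 < m x)%N -> u x = (alpha x + beta x) / 2.
  by rewrite /u lt0n => /negbTE ->.
have max_ge (P : R) : P <= Num.max P 0 /\ 0 <= Num.max P 0.
  by rewrite !le_max !lexx orbT.
have u_ge0 x : 0 <= u x.
  have [mx0|mx_pos] := posnP (m x).
    by rewrite u_unmatched //; apply: sumr_ge0 => y _; exact: normr_ge0.
  rewrite u_matched //; have := dual x x mx_pos mx_pos.
  by have [_] := max_ge (Phi x x); lra.
exists u; split=> // [x y|x].
  have [mx0|mx_pos] := posnP (m x).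
    by rewrite u_unmatched //; have := le_sum_norm (Phi x) y; have := u_ge0 y; lra.
  have [my0|my_pos] := posnP (m y).
    rewrite (u_unmatched y) // Phi_sym.
    by have := le_sum_norm (Phi y) x; have := u_ge0 x; lra.
  rewrite !u_matched //; have := dual x y mx_pos my_pos.
  have := dual y x my_pos mx_pos; rewrite (Phi_sym y x).
  by have [] := max_ge (Phi x y); lra.
have [mx0|mx_pos] := posnP (m x); first by rewrite mx0 !mul0r.
by rewrite u_matched // -muln2 natrM; field.
Qed.

End Roommates.

Theorem corollary1 (R : realFieldType) (X : finType) (x0 : X)
  (n : X -> nat) (Phi : X -> X -> R)
  (heven : forall x, ~~ odd (n x))
  (hsym : forall x y, Phi x y = Phi y x) :
  exists mu : X -> X -> nat, stable_roommate_matching n Phi mu.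
Proof.
pose m x := (n x)./2.
have n_double x : n x = (m x).*2 by rewrite even_halfK.
have [c [alpha [beta [rows cols dual value]]]] :=
  transport_duality m (fun x y => Num.max (Phi x y) 0).
have [u [u_ge0 u_stable u_value]] := symmetric_prices hsym dual.
(* The assignment may pair copies with nonpositive surplus; those pairs are
   dropped from [nu], hence the surplus [Num.max (Phi x y) 0] above. *)
pose nu x y := if 0 < Phi x y then c x y else 0%N.
have nu_le x y : (nu x y <= c x y)%N by rewrite /nu; case: ifP.
have nu_surplus x y : (nu x y)%:R * Phi x y = (c x y)%:R * Num.max (Phi x y) 0.
  by rewrite /nu; case: ltrP; rewrite ?mul0r ?mulr0.
exists (symmetrize nu); apply: symmetrize_stable => // [x|].
  rewrite n_double -addnn -{1}(rows x) -(cols x).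
  by apply: leq_add; apply: leq_sum.
under eq_bigr do rewrite n_double u_value.
by rewrite value; apply: eq_bigr => x _; apply: eq_bigr => y _; rewrite nu_surplus.
Qed.
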